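(* Let $f\colon2^{\mathcal N}\to\mathbb R_{\ge0}$ be a non-negative submodular function, $\mathbf p$ a positive price vector over $\mathcal N$, $s\in\mathcal N$ and $\gamma\in(0,1)$. Let $\mathcal N^*=(\mathcal N\setminus\{s\})\cup\{\sigma_1,\sigma_2\}$ with new elements $\sigma_1,\sigma_2$, and define $f^*\colon2^{\mathcal N^*}\to\mathbb R_{\ge0}$ by $$f^*(S)=f(\widehat S)+\gamma\,\big(f(\widehat S\cup\{s\})-f(\widehat S)\big)\,\mathbb I[\sigma_1\in S]+(1-\gamma)\,\big(f(\widehat S\cup\{s\})-f(\widehat S)\big)\,\mathbb I[\sigma_2\in S],$$ where $\widehat S=S\setminus\{\sigma_1,\sigma_2\}$ and $\mathbb I[\cdot]$ is the indicator. Then $f^*$ is submodular.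
   Context: $f$ is submodular if $f(S\cup\{u\})-f(S)\ge f(T\cup\{u\})-f(T)$ for all $S\subseteq T$ and $u\notin T$. (The construction of $f^*$, together with prices $p^*_{\sigma_1}=\gamma p_s$, $p^*_{\sigma_2}=(1-\gamma)p_s$ and $p^*_x=p_x$ otherwise, is called a $\gamma$-split of $s$.) *)

From mathcomp Require Import all_boot all_order all_algebra.
Set Implicit Arguments. Unset Strict Implicit. Unset Printing Implicit Defensive.
Import Order.TTheory GRing.Theory Num.Theory.
Local Open Scope ring_scope.

Definition submodular (R : numDomainType) (T : finType) (f : {set T} -> R) : Prop :=
  forall (S U : {set T}) (u : T), S \subset U -> u \notin U ->
    f (U :|: [set u]) - f U <= f (S :|: [set u]) - f S.

(* Ground set N* = (N \ {s}) + {sigma1, sigma2}: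
   inl x for x in N with x <> s, inr false = sigma1, inr true = sigma2. *)
Definition split_ground (N : finType) (s : N) : finType :=
  ({x : N | x != s} + bool)%type.

Definition sigma1 (N : finType) (s : N) : split_ground s := inr false.
Definition sigma2 (N : finType) (s : N) : split_ground s := inr true.

(* hat S = S \ {sigma1, sigma2}, viewed as a subset of N. *)
Definition hat (N : finType) (s : N) (S : {set split_ground s}) : {set N} :=
  [set x : N | if @insub N (fun y => y != s) _ x is Some y
               then (inl y : split_ground s) \in S else false].

Definition fstar (R : numDomainType) (N : finType) (f : {set N} -> R) (s : N)
    (gamma : R) (S : {set split_ground s}) : R :=
  let H := hat S in
  let marg := f (H :|: [set s]) - f H in
  f H + gamma * marg * (sigma1 s \in S)%:R
      + (1 - gamma) * marg * (sigma2 s \in S)%:R.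

(* Writing [w S] for the weight gamma [sigma1 \in S] + (1 - gamma) [sigma2 \in S]
   in [0, 1], we have f* S = f Ŝ + w S * (f (Ŝ + s) - f Ŝ).  Adding a copy
   sigma_b of s raises w by the same amount for every set not containing it, so
   the marginal of sigma_b is a fixed non-negative multiple of the marginal of s
   in f.  Adding any other element x, the marginal is the convex combination
   (1 - w S) * m_x(Ŝ) + w S * m_x(Ŝ + s) of marginals of x in f; it decreases in
   Ŝ by submodularity of f, and in w S because m_x(Ŝ + s) <= m_x(Ŝ). *)

From mathcomp Require Import all_boot all_order all_algebra.
From mathcomp Require Import ring lra.
Set Implicit Arguments.
Unset Strict Implicit.
Unset Printing Implicit Defensive.
Import Order.TTheory GRing.Theory Num.Theory.
Local Open Scope ring_scope.

Definition marginal {R : zmodType} {T : finType} (f : {set T} -> R)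
    (A : {set T}) (u : T) : R :=
  f (A :|: [set u]) - f A.

Lemma ler_convex_comb (R : realDomainType) (a0 a1 b0 b1 c d : R) :
  0 <= c <= d -> d <= 1 -> b0 <= a0 -> b1 <= a1 -> a1 <= a0 ->
  (1 - d) * b0 + d * b1 <= (1 - c) * a0 + c * a1.
Proof. by move=> /andP[c0 cd] d1 ba0 ba1 a10; nra. Qed.

Section Hat.
Variables (N : finType) (s : N).
Local Notation G := (split_ground s).

Lemma mem_hat_val (S : {set G}) (z : {x : N | x != s}) :
  (val z \in hat S) = (inl z \in S).
Proof. by rewrite inE valK. Qed.

Lemma s_notin_hat (S : {set G}) : s \notin hat S.
Proof. by rewrite inE insubF ?eqxx. Qed.

Lemma hatS (S U : {set G}) : S \subset U -> hat S \subset hat U.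
Proof.
move=> SU; apply/subsetP => y; rewrite !inE.
by case: insub => // z; apply: (subsetP SU).
Qed.

Lemma hat_eq (A : {set G}) (X : {set N}) :
  s \notin X -> (forall z, (inl z \in A) = (val z \in X)) -> hat A = X.
Proof.
move=> sX AX; apply/setP => y; have [->|ys] := eqVneq y s.
  by rewrite (negbTE (s_notin_hat A)) (negbTE sX).
by rewrite -[y]/(val (Sub y ys : {x : N | x != s})) mem_hat_val AX.
Qed.

Lemma hatU_inl (U : {set G}) (x : {x : N | x != s}) :
  hat (U :|: [set inl x]) = hat U :|: [set val x].
Proof.
apply: hat_eq => [|z]; last by rewrite !in_setU !in_set1 mem_hat_val.
by rewrite in_setU in_set1 negb_or s_notin_hat eq_sym (valP x).
Qed.

Lemma hatU_inr (U : {set G}) (b : bool) : hat (U :|: [set inr b]) = hat U.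
Proof.
by apply: hat_eq => [|z]; rewrite ?s_notin_hat // in_setU in_set1 mem_hat_val orbF.
Qed.

End Hat.

Section GammaSplit.
Variables (R : realDomainType) (N : finType) (f : {set N} -> R) (s : N) (gamma : R).
Hypothesis gamma01 : 0 <= gamma <= 1.
Local Notation G := (split_ground s).

Definition sigma_weight (S : {set G}) : R :=
  gamma * (sigma1 s \in S)%:R + (1 - gamma) * (sigma2 s \in S)%:R.

Definition copy_weight (b : bool) : R := if b then 1 - gamma else gamma.

Lemma copy_weight_ge0 (b : bool) : 0 <= copy_weight b.
Proof. by case/andP: gamma01 => ? ?; case: b; rewrite /copy_weight /=; lra. Qed.

Lemma fstarE (S : {set G}) :
  fstar f gamma S = f (hat S) + sigma_weight S * marginal f (hat S) s.
Proof. by rewrite /fstar /sigma_weight /marginal; ring. Qed.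

Lemma sigma_weight_itv (S : {set G}) : 0 <= sigma_weight S <= 1.
Proof.
by move: gamma01 => /andP[? ?]; rewrite /sigma_weight;
  case: (sigma1 s \in S); case: (sigma2 s \in S); rewrite /=; apply/andP; split; lra.
Qed.

Lemma sigma_weightS (S U : {set G}) :
  S \subset U -> sigma_weight S <= sigma_weight U.
Proof.
move=> /subsetP SU; move: gamma01 (SU (sigma1 s)) (SU (sigma2 s)) => /andP[? ?].
rewrite /sigma_weight.
by case: (sigma1 s \in S); case: (sigma2 s \in S);
  case: (sigma1 s \in U); case: (sigma2 s \in U) => /= h1 h2;
  rewrite ?(h1 erefl) ?(h2 erefl) //; lra.
Qed.

Lemma sigma_weightU_inl (S : {set G}) (x : {x : N | x != s}) :
  sigma_weight (S :|: [set inl x]) = sigma_weight S.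
Proof. by rewrite /sigma_weight !in_setU !in_set1 !orbF. Qed.

Lemma sigma_weightU_inr (S : {set G}) (b : bool) : inr b \notin S ->
  sigma_weight (S :|: [set inr b]) = sigma_weight S + copy_weight b.
Proof.
have inr_eq (a c : bool) : (inr a == inr c :> G) = (a == c).
  by apply/eqP/eqP => [[]|->].
rewrite /sigma_weight /copy_weight /sigma1 /sigma2 !in_setU !in_set1 !inr_eq.
by case: b => /negbTE->; rewrite /= ?orbF; ring.
Qed.

Lemma fstar_marginal_inl (U : {set G}) (x : {x : N | x != s}) :
  marginal (fstar f gamma) U (inl x) =
    (1 - sigma_weight U) * marginal f (hat U) (val x)
    + sigma_weight U * marginal f (hat U :|: [set s]) (val x).
Proof.
rewrite /marginal !fstarE sigma_weightU_inl hatU_inl /marginal.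
by rewrite (setUAC _ [set val x]); ring.
Qed.

Lemma fstar_marginal_inr (U : {set G}) (b : bool) : inr b \notin U ->
  marginal (fstar f gamma) U (inr b) = copy_weight b * marginal f (hat U) s.
Proof.
by move=> bU; rewrite /marginal !fstarE sigma_weightU_inr // hatU_inr /marginal; ring.
Qed.

Hypothesis f_sub : submodular f.

Lemma fstar_submodular : submodular (@fstar R N f s gamma).
Proof.
move=> S U u SU uU; have hSU := hatS SU.
rewrite -/(marginal _ U u) -/(marginal _ S u).
case: u uU => [x|b] uU.
- rewrite !fstar_marginal_inl.
  have xU : val x \notin hat U by rewrite mem_hat_val.
  have xUs : val x \notin hat U :|: [set s].
    by rewrite in_setU in_set1 negb_or xU (valP x).
  have xSs : val x \notin hat S :|: [set s].
    by apply: contra xUs; apply/subsetP/setSU.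
  have /andP[wS0 _] := sigma_weight_itv S; have /andP[_ wU1] := sigma_weight_itv U.
  apply: ler_convex_comb => //.
  + by rewrite wS0 sigma_weightS.
  + exact: f_sub.
  + by apply: f_sub xUs; apply: setSU.
  + by apply: f_sub xSs; apply: subsetUl.
- have bS : inr b \notin S by apply: contra uU; apply: (subsetP SU).
  rewrite !fstar_marginal_inr // ler_wpM2l ?copy_weight_ge0 //.
  exact: f_sub (s_notin_hat U).
Qed.

End GammaSplit.

Theorem lemma5p20 (R : realFieldType) (N : finType) (f : {set N} -> R)
    (p : N -> R) (s : N) (gamma : R) :
  (forall S : {set N}, 0 <= f S) ->
  submodular f ->
  (forall x : N, 0 < p x) ->
  0 < gamma < 1 ->
  submodular (@fstar R N f s gamma).
Proof.
move=> _ f_sub _ /andP[gamma_gt0 gamma_lt1].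
by apply: fstar_submodular => //; rewrite !ltW.
Qed.
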